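(* Let $\lambda\in\{1,2\}$ and let $u,t,v,w$ be integers such that: $(u,t)$ satisfies $S_{\lambda,1}$ and $u\cdot(vw)=t^3+t^{\lambda}+1$ (so $u,t,vw$ are consecutive terms of $\langle u,t\rangle_{S_{\lambda,1}}=\langle t,vw\rangle_{S_{2,\lambda}}$); $(v,t)$ satisfies $S_{\lambda,1}$ (so $v,t,uw$ are consecutive terms of $\langle v,t\rangle_{S_{\lambda,1}}=\langle t,uw\rangle_{S_{2,\lambda}}$); $|t|$ is a prime; and $t\nmid (u-v)$. Then $(-w,t)$ satisfies $S_{\lambda,1}$, so $-w,t,-uv$ are, in that order, three consecutive terms of a third 4-chain $\langle -w,t\rangle_{S_{\lambda,1}}=\langle t,-uv\rangle_{S_{2,\lambda}}$.
   Context: For $\lambda_a,\lambda_b\in\{1,2\}$, a pair of integers $(x,y)$ satisfies the system $S_{\lambda_a,\lambda_b}$ if $x\mid y^3+y^{\lambda_a}+1$ and $y\mid x^3+x^{\lambda_b}+1$. For such a pair, $\langle x,y\rangle_{S_{\lambda_a,\lambda_b}}$ denotes the bi-infinite integer sequence $(u_n)$ with $u_0=x$, $u_1=y$ and $u_{n-1}u_{n+1}=u_n^3+u_n^{e_n}+1$ for all $n$, where $e_n$ has period 4 with $(e_0,e_1,e_2,e_3)=(\lambda_b,\lambda_a,3-\lambda_b,3-\lambda_a)$; sequences are identified up to shift and reversal of indices. ''$u,t,s$, in that order, are three consecutive terms of $\langle u,t\rangle_{S_{\lambda_a,\lambda_b}}$'' means $(u,t)$ satisfies $S_{\lambda_a,\lambda_b}$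 and $us=t^3+t^{\lambda_a}+1$. *)

From Stdlib Require Export ZArith Znumtheory.
Open Scope Z_scope.

Definition satisfiesS (la lb : Z) (x y : Z) : Prop :=
  (x | y ^ 3 + y ^ la + 1) /\ (y | x ^ 3 + x ^ lb + 1).

(** Modulo the prime [p = |t|], both [u] and [v] are roots of [X^3 + X + 1],
    and they are distinct roots since [t] does not divide [u - v]. Vieta then
    makes [-(u + v)] the third root and gives [u v (u + v) = 1 mod p]. On the
    other hand [u v w = t^3 + t^lam + 1 = 1 mod p], so [w = u + v mod p] and
    [-w] is again a root, i.e. [t] divides [(-w)^3 - w + 1]. *)

From Stdlib Require Import ZArith Znumtheory Lia.
Open Scope Z_scope.

Definition cubic (x : Z) : Z := x ^ 3 + x + 1.

Lemma cubic_sub_factor (a b : Z) :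
  cubic a - cubic b = (a - b) * (a ^ 2 + a * b + b ^ 2 + 1).
Proof. unfold cubic; ring. Qed.

Lemma divide_cubic_sub (t a b : Z) : (t | a - b) -> (t | cubic a - cubic b).
Proof.
  intros Hab; rewrite cubic_sub_factor; now apply Z.divide_mul_l.
Qed.

Lemma prime_abs_divide_mul (t a b : Z) :
  prime (Z.abs t) -> (t | a * b) -> (t | a) \/ (t | b).
Proof.
  intros Hp Hab; apply Z.divide_abs_l in Hab.
  destruct (prime_mult _ Hp _ _ Hab) as [H | H];
    [left | right]; now apply Z.divide_abs_l.
Qed.

Lemma prime_abs_not_divide_1 (t : Z) : prime (Z.abs t) -> ~ (t | 1).
Proof.
  intros [Hp _] H1; apply Z.divide_abs_l, Z.divide_1_r in H1; lia.
Qed.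

Lemma divide_pow_pos (t n : Z) : 0 < n -> (t | t ^ n).
Proof.
  intros Hn; exists (t ^ (n - 1)).
  rewrite Z.mul_comm, <- Z.pow_succ_r by lia; f_equal; lia.
Qed.

Section DistinctRoots.

Variables t u v : Z.
Hypothesis t_prime : prime (Z.abs t).
Hypothesis root_u : (t | cubic u).
Hypothesis root_v : (t | cubic v).
Hypothesis distinct_uv : ~ (t | u - v).

Lemma distinct_roots_quadratic : (t | u ^ 2 + u * v + v ^ 2 + 1).
Proof.
  assert (Hprod : (t | (u - v) * (u ^ 2 + u * v + v ^ 2 + 1))).
  { rewrite <- cubic_sub_factor; now apply Z.divide_sub_r. }
  now destruct (prime_abs_divide_mul _ _ _ t_prime Hprod).
Qed.

Lemma distinct_roots_product : (t | u * v * (u + v) - 1).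
Proof.
  replace (u * v * (u + v) - 1)
    with (u * (u ^ 2 + u * v + v ^ 2 + 1) - cubic u) by (unfold cubic; ring).
  apply Z.divide_sub_r; [apply Z.divide_mul_r, distinct_roots_quadratic | exact root_u].
Qed.

Lemma third_root : (t | cubic (- (u + v))).
Proof.
  replace (cubic (- (u + v)))
    with (- (cubic u + cubic v + 3 * (u * v * (u + v) - 1))) by (unfold cubic; ring).
  apply Z.divide_opp_r, Z.divide_add_r; [apply Z.divide_add_r; assumption |].
  apply Z.divide_mul_r, distinct_roots_product.
Qed.

Lemma inverse_product_congr (w : Z) : (t | u * v * w - 1) -> (t | w - (u + v)).
Proof.
  intros Hw.
  assert (Hprod : (t | u * v * (w - (u + v)))).
  { replace (u * v * (w - (u + v)))
      with ((u * v * w - 1) - (u * v * (u + v) - 1)) by ring.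
    apply Z.divide_sub_r; [exact Hw | exact distinct_roots_product]. }
  destruct (prime_abs_divide_mul _ _ _ t_prime Hprod) as [Hunit | Hcongr]; [| exact Hcongr].
  exfalso; apply (prime_abs_not_divide_1 t t_prime).
  replace 1 with (w * (u * v) - (u * v * w - 1)) by ring.
  apply Z.divide_sub_r; [apply Z.divide_mul_r, Hunit | exact Hw].
Qed.

Lemma opp_inverse_product_root (w : Z) : (t | u * v * w - 1) -> (t | cubic (- w)).
Proof.
  intros Hw.
  replace (cubic (- w)) with ((cubic (- w) - cubic (- (u + v))) + cubic (- (u + v)))
    by ring.
  apply Z.divide_add_r; [apply divide_cubic_sub | exact third_root].
  replace (- w - - (u + v)) with (- (w - (u + v))) by ring.
  now apply Z.divide_opp_r, inverse_product_congr.
Qed.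

End DistinctRoots.

Theorem theorem12 (lam u t v w : Z) :
  (lam = 1 \/ lam = 2) ->
  satisfiesS lam 1 u t ->
  u * (v * w) = t ^ 3 + t ^ lam + 1 ->
  satisfiesS lam 1 v t ->
  prime (Z.abs t) ->
  ~ (t | u - v) ->
  satisfiesS lam 1 (- w) t /\ (- w) * (- (u * v)) = t ^ 3 + t ^ lam + 1.
Proof.
  intros Hlam [_ Hu] Huvw [_ Hv] Ht Huv.
  rewrite Z.pow_1_r in Hu, Hv; fold (cubic u) in Hu; fold (cubic v) in Hv.
  assert (Hinv : (t | u * v * w - 1)).
  { replace (u * v * w - 1) with (t ^ 3 + t ^ lam) by (rewrite <- Z.mul_assoc, Huvw; ring).
    apply Z.divide_add_r; apply divide_pow_pos; lia. }
  split; [split |].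
  - exists (- (u * v)); rewrite <- Huvw; ring.
  - rewrite Z.pow_1_r; exact (opp_inverse_product_root t u v Ht Hu Hv Huv w Hinv).
  - rewrite <- Huvw; ring.
Qed.
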